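(* Let $\rho,\sigma$ be quantum states on a $d$-dimensional Hilbert space with $[\rho,\sigma]=0$, and let $\rho',\sigma'$ be quantum states on a $d'$-dimensional Hilbert space with $[\rho',\sigma']=0$, where $\sigma$ and $\sigma'$ are both full-rank. For $1>\epsilon>0$ define $f_\sigma(\rho,\epsilon):=\sqrt{V(\rho\|\sigma)\left(2\epsilon^{-1}-1\right)}$ and analogously $f_{\sigma'}(\rho',\epsilon):=\sqrt{V(\rho'\|\sigma')\left(2\epsilon^{-1}-1\right)}$. If $$S(\rho\|\sigma)-f_\sigma(\rho,\epsilon)\;\geq\; S(\rho'\|\sigma')+f_{\sigma'}(\rho',\epsilon),$$ then $(\rho,\sigma)\succ_\epsilon(\rho',\sigma')$.
   Context: All logarithms are base 2. The relative entropy is $S(\rho\|\sigma)=\mathrm{Tr}(\rho(\log\rho-\log\sigma))$ and the relative variance (variance of relative surprisal) is $V(\rho\|\sigma)=\mathrm{Tr}\left(\rho(\log\rho-\log\sigma)^2\right)-S(\rho\|\sigma)^2$. The trace distance is $D(\rho,\tau)=\frac12\|\rho-\tau\|_1$. For pairs of states, $(\rho,\sigma)\succ(\rho',\sigma')$ means there exists a quantum channel $\mathcal E$ (from states on the first Hilbert space to states on the second) with $\mathcal E(\rho)=\rho'$ and $\mathcal E(\sigma)=\sigma'$. Moreover $(\rho,\sigma)\succ_\epsilon(\rho',\sigma')$ means there exists a state $\rho'_\epsilon$ with $(\rho,\sigma)\succ(\rho'_\epsilon,\sigma')$ and $D(\rho',\rho'_\epsilon)\le\epsilon$. *)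

From HB Require Import structures.
From mathcomp Require Import all_boot all_order all_algebra.
From mathcomp Require Import complex.
From mathcomp Require Import reals exp.
Set Implicit Arguments. Unset Strict Implicit. Unset Printing Implicit Defensive.
Import Order.TTheory GRing.Theory Num.Theory.
Local Open Scope ring_scope.
Local Open Scope complex_scope.

Section Quantum.
Variable R : realType.
Local Notation C := R[i].

Definition adj {m n} (A : 'M[C]_(m, n)) : 'M[C]_(n, m) := (map_mx Num.conj A)^T.

Definition log2 (x : R) : R := ln x / ln 2.

(* Functional calculus for normal (in particular Hermitian) matrices:
   if A = P^-1 diag(l) P with P unitary (spectral theorem), then
   f(A) := P^-1 diag(f(Re l)) P. *)
Definition mxfun (f : R -> R) {n} (A : 'M[C]_n) : 'M[C]_n :=
  invmx (spectralmx A) *m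
    diag_mx (map_mx (fun z : C => (f (complex.Re z))%:C) (spectral_diag A)) *m spectralmx A.

Definition mxlog2 {n} (A : 'M[C]_n) := mxfun log2 A.

Definition psdmx {n} (A : 'M[C]_n) : Prop :=
  A \is hermsymmx /\ forall v : 'rV[C]_n, 0 <= (v *m A *m adj v) 0 0.

Definition is_state {n} (rho : 'M[C]_n) : Prop := psdmx rho /\ \tr rho = 1.

Definition rel_entropy {n} (rho sigma : 'M[C]_n) : R :=
  complex.Re (\tr (rho *m (mxlog2 rho - mxlog2 sigma))).

Definition rel_variance {n} (rho sigma : 'M[C]_n) : R :=
  complex.Re (\tr (rho *m ((mxlog2 rho - mxlog2 sigma) *m (mxlog2 rho - mxlog2 sigma))))
  - rel_entropy rho sigma ^+ 2.

Definition trnorm {n} (X : 'M[C]_n) : R := complex.Re (\tr (mxfun Num.sqrt (adj X *m X))).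
Definition trdist {n} (rho tau : 'M[C]_n) : R := trnorm (rho - tau) / 2.

Definition is_channel {n n'} (E : 'M[C]_n -> 'M[C]_n') : Prop :=
  exists (m : nat) (K : 'I_m -> 'M[C]_(n', n)),
    \sum_(k < m) adj (K k) *m K k = 1%:M /\
    forall X : 'M[C]_n, E X = \sum_(k < m) K k *m X *m adj (K k).

Definition majorizes {n n'} (rho sigma : 'M[C]_n) (rho' sigma' : 'M[C]_n') : Prop :=
  exists E : 'M[C]_n -> 'M[C]_n', is_channel E /\ E rho = rho' /\ E sigma = sigma'.

Definition majorizes_eps {n n'} (eps : R) (rho sigma : 'M[C]_n)
    (rho' sigma' : 'M[C]_n') : Prop :=
  exists rho'e : 'M[C]_n', majorizes rho sigma rho'e sigma' /\ trdist rho' rho'e <= eps.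

Definition fdev {n} (rho sigma : 'M[C]_n) (eps : R) : R :=
  Num.sqrt (rel_variance rho sigma * (2 / eps - 1)).

End Quantum.

(* Commuting states are diagonal in a common orthonormal basis, so both pairs reduce to
   pairs of probability distributions (p, q) and (p', q'), and S and V become the mean and
   variance of the log-likelihood ratio log p/q under p.  By Chebyshev's inequality,
   p >= 2^a q outside a set of p-mass eps, where a = S(rho||sigma) - f_sigma(rho, eps),
   and likewise p' <= 2^a q' outside a set of p'-mass eps.  A measure-and-prepare
   stochastic map then sends q exactly to q' and p to within eps of p': accept the
   typical x with a fixed probability, prepare p' conditioned on its typical set on
   acceptance and a residual distribution otherwise; the residual is a distribution
   because 2^a bounds both likelihood ratios.  Finally a stochastic matrix W acts on
   states diagonal in the two eigenbases through the Kraus operators sqrt(W x y) |y><x|. *)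
From HB Require Import structures.
From mathcomp Require Import all_boot all_order all_algebra.
From mathcomp Require Import complex.
From mathcomp Require Import reals exp.
From mathcomp Require Import ring lra.
Set Implicit Arguments. Unset Strict Implicit. Unset Printing Implicit Defensive.
Import Order.TTheory GRing.Theory Num.Theory.
Local Open Scope ring_scope.

Section ClassicalConversion.
Variable R : realType.
Implicit Types eps : R.

Definition is_dist n (p : 'I_n -> R) := (forall x, 0 <= p x) /\ \sum_x p x = 1.

Definition stochastic n n' (W : 'I_n -> 'I_n' -> R) :=
  (forall x y, 0 <= W x y) /\ forall x, \sum_y W x y = 1.

Definition stoch_map n n' (W : 'I_n -> 'I_n' -> R) (f : 'I_n -> R) y :=
  \sum_x W x y * f x.

(* The center [mu] is arbitrary, and (2/eps - 1)^-1 = eps/(2 - eps) <= eps. *)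
Lemma chebyshev_tail n (p X : 'I_n -> R) mu eps :
  (forall x, 0 <= p x) -> 0 < eps -> eps < 1 ->
  \sum_(x | mu + Num.sqrt ((\sum_y p y * (X y - mu) ^+ 2) * (2 / eps - 1)) < X x) p x
    <= eps.
Proof.
move=> p0 e0 e1.
set V := \sum_y _; set k := 2 / eps - 1; set t := Num.sqrt (V * k).
set PB := \sum_(x | _) p x.
have pV y : 0 <= p y * (X y - mu) ^+ 2 by rewrite mulr_ge0 ?sqr_ge0.
have V0 : 0 <= V by exact: sumr_ge0.
have k1 : 1 < k by rewrite ltrBrDr ltr_pdivlMr //; lra.
have t0 : 0 <= t by exact: sqrtr_ge0.
have PB0 : 0 <= PB by exact: sumr_ge0.
have tailV : PB * t ^+ 2 <= V.
  rewrite mulr_suml; apply: (@le_trans _ _ (\sum_(x | mu + t < X x) p x * (X x - mu) ^+ 2)).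
    apply: ler_sum => x Bx; apply: ler_wpM2l => //.
    by rewrite ler_sqr ?nnegrE; lra.
  by rewrite [leRHS](bigID (fun x => mu + t < X x)) /= lerDl sumr_ge0.
have [V00|Vn0] := eqVneq V 0.
  rewrite /PB big1 ?ltW // => x Bx.
  have /eqP := V00; rewrite psumr_eq0 // => /allP/(_ x (mem_index_enum x)).
  rewrite mulf_eq0 sqrf_eq0 subr_eq0 => /orP[/eqP //|/eqP Xx].
  by move: Bx; rewrite Xx -[ltRHS]addr0 ltrD2l ltNge t0.
have Vp : 0 < V by rewrite lt_def Vn0 V0.
rewrite /t sqr_sqrtr ?mulr_ge0 // in tailV; last lra.
have : PB * k <= 1 by rewrite -(ler_pM2l Vp) mulr1 mulrCA.
have -> : PB * k = PB * (2 - eps) / eps by rewrite /k; field; rewrite gt_eqF.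
rewrite ler_pdivrMr // mul1r; nra.
Qed.

Lemma chebyshev_mass n (p X : 'I_n -> R) mu eps : is_dist p -> 0 < eps -> eps < 1 ->
  1 - eps <= \sum_(x | (0 < p x) &&
    (X x <= mu + Num.sqrt ((\sum_y p y * (X y - mu) ^+ 2) * (2 / eps - 1)))) p x.
Proof.
move=> [p0 p1] e0 e1; have := chebyshev_tail X mu p0 e0 e1.
set t := Num.sqrt _ => tail.
suff : 1 <= \sum_(x | (0 < p x) && (X x <= mu + t)) p x + \sum_(x | mu + t < X x) p x.
  by lra.
rewrite -p1 [X in _ <= X + _]big_mkcond [X in _ <= _ + X]big_mkcond -big_split /=.
apply: ler_sum => x _.
by have := p0 x; case: ltP => /= [|px] _; case: leP => /=; lra.
Qed.

Definition log_ratio n (p q : 'I_n -> R) x := log2 (p x) - log2 (q x).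
Definition crel_entropy n (p q : 'I_n -> R) := \sum_x p x * log_ratio p q x.
Definition crel_variance n (p q : 'I_n -> R) :=
  \sum_x p x * log_ratio p q x ^+ 2 - crel_entropy p q ^+ 2.
Definition cfdev n (p q : 'I_n -> R) eps := Num.sqrt (crel_variance p q * (2 / eps - 1)).

Lemma crel_varianceE n (p q : 'I_n -> R) : \sum_x p x = 1 ->
  crel_variance p q = \sum_x p x * (log_ratio p q x - crel_entropy p q) ^+ 2.
Proof.
move=> p1; rewrite /crel_variance; set S := crel_entropy p q.
transitivity (\sum_x p x * log_ratio p q x ^+ 2 - \sum_x 2 * S * (p x * log_ratio p q x)
   + \sum_x S ^+ 2 * p x).
  by rewrite -!mulr_sumr p1 /S /crel_entropy; ring.
by rewrite -sumrB -big_split /=; apply: eq_bigr => x _; ring.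
Qed.

Lemma typical_upper n (p q : 'I_n -> R) eps : is_dist p -> 0 < eps -> eps < 1 ->
  1 - eps <= \sum_(x | (0 < p x) &&
    (log_ratio p q x <= crel_entropy p q + cfdev p q eps)) p x.
Proof.
move=> dp e0 e1; have := chebyshev_mass (log_ratio p q) (crel_entropy p q) dp e0 e1.
by rewrite /cfdev crel_varianceE //; case: dp.
Qed.

Lemma typical_lower n (p q : 'I_n -> R) eps : is_dist p -> 0 < eps -> eps < 1 ->
  1 - eps <= \sum_(x | (0 < p x) &&
    (crel_entropy p q - cfdev p q eps <= log_ratio p q x)) p x.
Proof.
move=> dp e0 e1.
have := chebyshev_mass (fun x => - log_ratio p q x) (- crel_entropy p q) dp e0 e1.
rewrite /cfdev crel_varianceE; last by case: dp.
have -> : \sum_y p y * (- log_ratio p q y - - crel_entropy p q) ^+ 2 =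
          \sum_y p y * (log_ratio p q y - crel_entropy p q) ^+ 2.
  by apply: eq_bigr => y _; rewrite -opprD sqrrN.
by under eq_bigl do rewrite lerNl opprD opprK.
Qed.

Lemma le_log2_ratio (x y a : R) : 0 < x -> 0 < y ->
  (a <= log2 x - log2 y) = (y * 2 `^ a <= x).
Proof.
move=> x0 y0; have ln2_gt0 : 0 < ln (2 : R) by rewrite ln_gt0 // ltr1n.
rewrite /log2 -mulrBl ler_pdivlMr // -ler_ln ?posrE ?mulr_gt0 ?powR_gt0 //.
by rewrite lnM ?posrE ?powR_gt0 // ln_powR lerBrDl.
Qed.

Lemma log2_ratio_le (x y a : R) : 0 < x -> 0 < y ->
  (log2 x - log2 y <= a) = (x <= 2 `^ a * y).
Proof.
move=> x0 y0; have ln2_gt0 : 0 < ln (2 : R) by rewrite ln_gt0 // ltr1n.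
rewrite /log2 -mulrBl ler_pdivrMr // -ler_ln ?posrE ?mulr_gt0 ?powR_gt0 //.
by rewrite lnM ?posrE ?powR_gt0 // ln_powR lerBlDr.
Qed.

Definition measure_prepare n n' (T : 'I_n -> R) (r s : 'I_n' -> R) x y :=
  T x * r y + (1 - T x) * s y.

Lemma measure_prepare_stochastic n n' (T : 'I_n -> R) (r s : 'I_n' -> R) :
  (forall x, 0 <= T x <= 1) -> is_dist r -> is_dist s ->
  stochastic (measure_prepare T r s).
Proof.
move=> T01 [r0 r1] [s0 s1]; split=> [x y|x].
  by have /andP[T0 T1] := T01 x; rewrite addr_ge0 ?mulr_ge0 ?subr_ge0.
by rewrite big_split /= -!mulr_sumr r1 s1 !mulr1 addrC subrK.
Qed.

Lemma stoch_map_measure_prepare n n' (T : 'I_n -> R) (r s : 'I_n' -> R) f y :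
  stoch_map (measure_prepare T r s) f y =
  (\sum_x f x * T x) * r y + (\sum_x f x - \sum_x f x * T x) * s y.
Proof.
rewrite -sumrB !mulr_suml -big_split /=; apply: eq_bigr => x _.
by rewrite /measure_prepare; ring.
Qed.

Lemma residual_dist n (q r : 'I_n -> R) t : is_dist q -> is_dist r -> 0 <= t <= 1 ->
  (forall y, t * r y <= q y) ->
  exists2 s, is_dist s & forall y, t * r y + (1 - t) * s y = q y.
Proof.
move=> [q0 q1] [r0 r1] /andP[t0 t1]; have [->|t_neq1] := eqVneq t 1 => rq.
  exists q; first by [].
  move=> y; rewrite subrr mul0r addr0 mul1r; apply/eqP; rewrite eq_le.
  have := rq y; rewrite mul1r => -> /=.
  have /eqP : \sum_z (q z - r z) = 0 by rewrite sumrB q1 r1 subrr.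
  rewrite psumr_eq0 => [/allP/(_ y (mem_index_enum y))|z _]; last first.
    by rewrite subr_ge0 -(mul1r (r z)) rq.
  by rewrite subr_eq0 => /eqP ->.
have t_lt1 : 0 < 1 - t by rewrite subr_gt0 lt_neqAle t_neq1.
exists (fun y => (q y - t * r y) / (1 - t)) => [|y]; last by field; rewrite gt_eqF.
split=> [y|]; first by rewrite divr_ge0 ?subr_ge0 ?rq ?(ltW t_lt1).
by rewrite -mulr_suml sumrB -mulr_sumr q1 r1 mulr1 divff ?gt_eqF.
Qed.

Lemma l1_dist_mix_le n (p r s : 'I_n -> R) m : is_dist p -> is_dist r -> is_dist s ->
  m <= 1 -> (forall y, m * r y <= p y) ->
  \sum_y `|p y - (m * r y + (1 - m) * s y)| <= 2 * (1 - m).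
Proof.
move=> [p0 p1] [r0 r1] [s0 s1] m1 mrp.
have ms y : 0 <= (1 - m) * s y by rewrite mulr_ge0 ?subr_ge0.
apply: (@le_trans _ _ (\sum_y ((p y - m * r y) + (1 - m) * s y))).
  apply: ler_sum => y _; rewrite opprD addrA.
  apply: (le_trans (ler_normB _ _)).
  by rewrite !ger0_norm ?subr_ge0.
by rewrite big_split sumrB /= -!mulr_sumr p1 r1 s1; lra.
Qed.

Lemma scaled_indicator_test n (p q : 'I_n -> R) (A : pred 'I_n) (K m : R) :
  (forall x, 0 <= q x) -> 0 < m -> m <= \sum_(x | A x) p x ->
  (forall x, A x -> K * q x <= p x) ->
  exists T, [/\ forall x, 0 <= T x <= 1, \sum_x p x * T x = m &
                 K * \sum_x q x * T x <= m].
Proof.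
move=> q0 m0 m_le_a pqA; set a := \sum_(x | A x) p x in m_le_a *.
have a0 : 0 < a := lt_le_trans m0 m_le_a.
exists (fun x => if A x then m / a else 0).
have sumT f : \sum_x f x * (if A x then m / a else 0) = m / a * \sum_(x | A x) f x.
  rewrite [in RHS]big_mkcond mulr_sumr; apply: eq_bigr => x _.
  by case: (A x); rewrite ?mulr0 // mulrC.
split=> [x||]; first case: (A x); rewrite /= ?lexx ?ler01 //.
  by rewrite divr_ge0 ?(ltW m0) ?(ltW a0) // ler_pdivrMr // mul1r.
  by rewrite sumT mulfVK ?gt_eqF.
rewrite sumT mulrCA -[leRHS](mulfVK (lt0r_neq0 a0)).
apply: ler_wpM2l; first by rewrite divr_ge0 ?ltW.
by rewrite /a mulr_sumr; exact: ler_sum.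
Qed.

Lemma conditioned_dist n (p q : 'I_n -> R) (A : pred 'I_n) (K m : R) :
  is_dist p -> (forall y, 0 <= q y) -> 0 <= K -> 0 < m -> m <= \sum_(y | A y) p y ->
  (forall y, A y -> p y <= K * q y) ->
  exists2 r, is_dist r & forall y, m * r y <= p y /\ m * r y <= K * q y.
Proof.
move=> [p0 p1] q0 K0 m0 m_le_a pqA; set a := \sum_(y | A y) p y in m_le_a *.
have a0 : 0 < a := lt_le_trans m0 m_le_a.
exists (fun y => if A y then p y / a else 0).
  split=> [y|]; first by case: (A y); rewrite /= ?divr_ge0 ?p0 ?(ltW a0).
  by rewrite /= -big_mkcond /= -mulr_suml divff ?gt_eqF.
move=> y; case: (boolP (A y)) => [Ay|_] /=; last first.
  by rewrite mulr0; split; [exact: p0 | exact: mulr_ge0].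
have mpa : m * (p y / a) <= p y.
  by rewrite mulrCA ler_piMr ?p0 // ler_pdivrMr // mul1r.
by split; last exact: le_trans mpa (pqA y Ay).
Qed.

Lemma stochastic_conversion n n' (p q : 'I_n -> R) (p' q' : 'I_n' -> R)
    (A : pred 'I_n) (A' : pred 'I_n') (K eps : R) :
  is_dist p -> is_dist q -> is_dist p' -> is_dist q' -> 0 < K -> eps < 1 ->
  (forall x, A x -> K * q x <= p x) -> (forall y, A' y -> p' y <= K * q' y) ->
  1 - eps <= \sum_(x | A x) p x -> 1 - eps <= \sum_(y | A' y) p' y ->
  exists W, [/\ stochastic W, stoch_map W q =1 q' &
                \sum_y `|p' y - stoch_map W p y| <= 2 * eps].
Proof.
move=> dp [q0 q1] dp' dq' K0 e1 pqA pqA' massA massA'.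
pose m := Num.min (\sum_(x | A x) p x) (\sum_(y | A' y) p' y).
have m_ge : 1 - eps <= m by rewrite le_min massA massA'.
have m_pos : 0 < m by lra.
have [m_le_a m_le_a'] : m <= \sum_(x | A x) p x /\ m <= \sum_(y | A' y) p' y.
  by split; rewrite ge_min lexx ?orbT.
have [T [T01 pT qT_le]] := scaled_indicator_test q0 m_pos m_le_a pqA.
have [r dr r_le] := conditioned_dist dp' dq'.1 (ltW K0) m_pos m_le_a' pqA'.
set qT := \sum_x q x * T x in qT_le.
have qT01 : 0 <= qT <= 1.
  rewrite sumr_ge0 => [|x _]; last by have /andP[T0 _] := T01 x; rewrite mulr_ge0.
  by rewrite -q1 ler_sum // => x _; have /andP[_ T1] := T01 x; rewrite ler_piMr.
have qTr y : qT * r y <= q' y.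
  have [_ mrKq] := r_le y; have r0 := dr.1 y; have /andP[qT0 _] := qT01.
  by rewrite -(ler_pM2l K0) mulrA (le_trans _ mrKq) // ler_wpM2r.
have [s ds qs] := residual_dist dq' dr qT01 qTr.
exists (measure_prepare T r s); split.
- exact: measure_prepare_stochastic.
- by move=> y; rewrite stoch_map_measure_prepare q1 qs.
- under eq_bigr do rewrite stoch_map_measure_prepare dp.2 pT.
  apply: le_trans (l1_dist_mix_le dp' dr ds _ (fun y => (r_le y).1)) _; last lra.
  apply: le_trans m_le_a' _; rewrite -dp'.2 [leRHS](bigID A') /= lerDl.
  by apply: sumr_ge0 => y _; exact: dp'.1.
Qed.

Lemma crel_conversion n n' (p q : 'I_n -> R) (p' q' : 'I_n' -> R) eps :
  is_dist p -> is_dist q -> (forall x, 0 < q x) ->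
  is_dist p' -> is_dist q' -> (forall y, 0 < q' y) -> 0 < eps -> eps < 1 ->
  crel_entropy p' q' + cfdev p' q' eps <= crel_entropy p q - cfdev p q eps ->
  exists W, [/\ stochastic W, stoch_map W q =1 q' &
                \sum_y `|p' y - stoch_map W p y| <= 2 * eps].
Proof.
move=> dp dq q_gt0 dp' dq' q_gt0' e0 e1 S_gap.
set a := crel_entropy p q - cfdev p q eps in S_gap.
apply: (stochastic_conversion (K := 2 `^ a) dp dq dp' dq' (powR_gt0 _ _) e1
          _ _ (typical_lower q dp e0 e1) (typical_upper q' dp' e0 e1)) => //.
- by move=> x /andP[p_gt0]; rewrite /log_ratio le_log2_ratio // mulrC.
- move=> y /andP[p_gt0' /le_trans/(_ S_gap)].
  by rewrite /log_ratio log2_ratio_le.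
Qed.
End ClassicalConversion.

Local Open Scope complex_scope.

Section QuantumToClassical.
Variable R : realType.
Local Notation C := R[i].

Lemma diag_mx_intertwine_map n (a b : 'rV[C]_n) (g : C -> C) (W : 'M[C]_n) :
  diag_mx b *m W = W *m diag_mx a ->
  diag_mx (map_mx g b) *m W = W *m diag_mx (map_mx g a).
Proof.
rewrite !mul_diag_mx !mul_mx_diag => /matrixP bWa; apply/matrixP => i j.
have := bWa i j; rewrite !mxE => bWa_ij.
have [->|Wij_neq0] := eqVneq (W i j) 0; first by rewrite mulr0 mul0r.
have /eqP : (b 0 i - a 0 j) * W i j = 0 by rewrite mulrBl bWa_ij mulrC subrr.
by rewrite mulf_eq0 (negPf Wij_neq0) orbF subr_eq0 => /eqP ->; rewrite mulrC.
Qed.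

(* [mxfun] uses its own spectral decomposition; it is related to any other one by
   the intertwiner [Q *m invmx P]. *)
Lemma unitary_diag_map n (P Q : 'M[C]_n) (a b : 'rV[C]_n) (g : C -> C) :
  P \in unitmx -> Q \in unitmx ->
  invmx Q *m diag_mx b *m Q = invmx P *m diag_mx a *m P ->
  invmx Q *m diag_mx (map_mx g b) *m Q = invmx P *m diag_mx (map_mx g a) *m P.
Proof.
move=> Pu Qu QbP; set W := Q *m invmx P.
have bWa : diag_mx b *m W = W *m diag_mx a.
  have := congr1 (fun X => Q *m X *m invmx P) QbP => /=.
  by rewrite !mulmxA (mulmxV Qu) mul1mx -!mulmxA (mulmxV Pu) mulmx1 /W !mulmxA.
have -> : invmx Q *m diag_mx (map_mx g b) *m Q =
          invmx Q *m (diag_mx (map_mx g b) *m W) *m P.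
  by rewrite /W !mulmxA (mulmxKV Pu).
rewrite (diag_mx_intertwine_map g bWa) /W !mulmxA (mulVmx Qu) mul1mx.
exact: erefl.
Qed.

Lemma mxfun_unitary_diag (f : R -> R) n (P : 'M[C]_n) (a : 'rV[C]_n) :
  P \is unitarymx ->
  mxfun f (invmx P *m diag_mx a *m P) =
  invmx P *m diag_mx (map_mx (fun z : C => (f (complex.Re z))%:C) a) *m P.
Proof.
move=> uP; set A := invmx P *m diag_mx a *m P.
have /orthomx_spectralP A_spectral : A \is normalmx.
  by apply/orthomx_spectral_subproof; exists (P, a).
exact: unitary_diag_map (unitarymx_unit uP) (spectral_unit A) (esym A_spectral).
Qed.

Definition rdiag n (f : 'I_n -> R) : 'M[C]_n := diag_mx (\row_i (f i)%:C).

Lemma eq_rdiag n (f g : 'I_n -> R) : f =1 g -> rdiag f = rdiag g.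
Proof. by move=> fg; congr diag_mx; apply/rowP => i; rewrite !mxE fg. Qed.

Lemma rdiagM n (f g : 'I_n -> R) : rdiag f *m rdiag g = rdiag (fun i => f i * g i).
Proof.
by rewrite /rdiag mulmx_diag; congr diag_mx; apply/rowP => i; rewrite !mxE rmorphM.
Qed.

Lemma rdiagB n (f g : 'I_n -> R) : rdiag f - rdiag g = rdiag (fun i => f i - g i).
Proof.
by rewrite /rdiag -raddfB; congr diag_mx; apply/rowP => i; rewrite !mxE rmorphB.
Qed.

Lemma mxtrace_rdiag n (f : 'I_n -> R) : \tr (rdiag f) = (\sum_i f i)%:C.
Proof.
by rewrite /rdiag mxtrace_diag rmorph_sum; apply: eq_bigr => i _; rewrite mxE.
Qed.

Lemma mxfun_rdiag (f : R -> R) n (P : 'M[C]_n) (g : 'I_n -> R) : P \is unitarymx ->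
  mxfun f (invmx P *m rdiag g *m P) = invmx P *m rdiag (fun i => f (g i)) *m P.
Proof.
move=> uP; rewrite /rdiag (mxfun_unitary_diag _ _ uP).
have -> : map_mx (fun z : C => (f (complex.Re z))%:C) (\row_i (g i)%:C) =
          \row_i (f (g i))%:C by apply/rowP => i; rewrite !mxE.
by [].
Qed.

Lemma mulmx_conj n (P X Y : 'M[C]_n) : P \in unitmx ->
  (invmx P *m X *m P) *m (invmx P *m Y *m P) = invmx P *m (X *m Y) *m P.
Proof. by move=> Pu; rewrite !mulmxA mulmxK. Qed.

Lemma conj_mxB n (P X Y : 'M[C]_n) :
  invmx P *m X *m P - invmx P *m Y *m P = invmx P *m (X - Y) *m P.
Proof. by rewrite -mulmxBl -mulmxBr. Qed.

Lemma mxtrace_conj n (P X : 'M[C]_n) : P \in unitmx -> \tr (invmx P *m X *m P) = \tr X.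
Proof. by move=> Pu; rewrite mxtrace_mulC mulmxA mulmxV // mul1mx. Qed.

Lemma mxlog2_ratio_rdiag n (P : 'M[C]_n) (p q : 'I_n -> R) : P \is unitarymx ->
  mxlog2 (invmx P *m rdiag p *m P) - mxlog2 (invmx P *m rdiag q *m P) =
  invmx P *m rdiag (log_ratio p q) *m P.
Proof.
by move=> uP; rewrite -rdiagB -conj_mxB; congr (_ - _); apply: mxfun_rdiag.
Qed.

Lemma rel_entropy_rdiag n (P : 'M[C]_n) (p q : 'I_n -> R) : P \is unitarymx ->
  rel_entropy (invmx P *m rdiag p *m P) (invmx P *m rdiag q *m P) = crel_entropy p q.
Proof.
move=> uP; have Pu := unitarymx_unit uP.
rewrite /rel_entropy (mxlog2_ratio_rdiag p q uP) (mulmx_conj _ _ Pu).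
by rewrite rdiagM (mxtrace_conj _ Pu) mxtrace_rdiag.
Qed.

Lemma rel_variance_rdiag n (P : 'M[C]_n) (p q : 'I_n -> R) : P \is unitarymx ->
  rel_variance (invmx P *m rdiag p *m P) (invmx P *m rdiag q *m P) = crel_variance p q.
Proof.
move=> uP; have Pu := unitarymx_unit uP.
rewrite /rel_variance (rel_entropy_rdiag p q uP) (mxlog2_ratio_rdiag p q uP).
rewrite !(mulmx_conj _ _ Pu) !rdiagM (mxtrace_conj _ Pu) mxtrace_rdiag /=.
by congr (_ - _); apply: eq_bigr => i _; rewrite expr2.
Qed.

Lemma trig_hermitian_diag n (N : 'M[C]_n) :
  is_trig_mx N -> (N ^t Num.conj)%sesqui = N -> diag_mx (\row_i N i i) = N.
Proof.
move=> /is_trig_mxP N_trig N_herm; apply/matrixP => i j; rewrite !mxE.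
have [<-|nij] := eqVneq i j; first by rewrite mulr1n.
rewrite mulr0n; case: (ltngtP i j) => [ij|ji|/val_inj eij]; first by rewrite N_trig.
  by move/matrixP: N_herm => /(_ i j); rewrite !mxE => <-; rewrite N_trig // conjC0.
by rewrite eij eqxx in nij.
Qed.

Lemma hermitian_trig_diag n (P M : 'M[C]_n) : P \is unitarymx -> M \is hermsymmx ->
  is_trig_mx (conjmx P M) ->
  M = invmx P *m diag_mx (\row_i conjmx P M i i) *m P.
Proof.
move=> uP hM N_trig; have Pu := unitarymx_unit uP.
have M_herm : (M ^t Num.conj)%sesqui = M.
  by move/is_hermitianmxP: hM => {2}->; rewrite expr0 scale1r.
rewrite trig_hermitian_diag //.
  by rewrite (conjumx _ Pu) !mulmxA (mulVmx Pu) mul1mx -mulmxA (mulVmx Pu) mulmx1.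
by rewrite (conjumx _ Pu) (invmx_unitary uP) !trmx_mul !map_mxM trmxCK M_herm mulmxA.
Qed.
Lemma codiagonalization2 n (A B : 'M[C]_n) : A \is hermsymmx -> B \is hermsymmx ->
  A *m B = B *m A ->
  exists P (a b : 'rV[C]_n), [/\ P \is unitarymx,
     A = invmx P *m diag_mx a *m P & B = invmx P *m diag_mx b *m P].
Proof.
move=> hA hB AB; have [P uP /andP[tA tB]] := cotrigonalization2 AB.
exists P, (\row_i conjmx P A i i), (\row_i conjmx P B i i).
by split; [exact: uP | exact: hermitian_trig_diag uP hA tA |
           exact: hermitian_trig_diag uP hB tB].
Qed.

Lemma adj_mul m n k (A : 'M[C]_(m, n)) (B : 'M[C]_(n, k)) : adj (A *m B) = adj B *m adj A.
Proof. by rewrite /adj map_mxM trmx_mul. Qed.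

Lemma adj_scale m n (c : C) (A : 'M[C]_(m, n)) : adj (c *: A) = Num.conj c *: adj A.
Proof. by rewrite /adj map_mxZ linearZ. Qed.

Lemma adj_unitary n (P : 'M[C]_n) : P \is unitarymx -> adj P = invmx P.
Proof. by move=> uP; rewrite invmx_unitary // /adj map_trmx. Qed.

Lemma adj_invmx_unitary n (P : 'M[C]_n) : P \is unitarymx -> adj (invmx P) = P.
Proof. by move=> uP; rewrite invmx_unitary // /adj map_trmx trmxCK. Qed.

Lemma adj_delta_mx m n (i : 'I_m) (j : 'I_n) :
  adj (delta_mx i j : 'M[C]_(m, n)) = delta_mx j i.
Proof.
apply/matrixP => a b; rewrite /adj !mxE.
by case: (b == i); case: (a == j); rewrite /= ?conjC0 ?conjC1.
Qed.

Lemma conjC_real (x : R) : Num.conj x%:C = x%:C.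
Proof. by rewrite conj_Creal // -complexr0 complex_real. Qed.

Lemma adj_rdiag n (f : 'I_n -> R) : adj (rdiag f) = rdiag f.
Proof.
rewrite /adj /rdiag map_diag_mx tr_diag_mx; congr diag_mx.
apply/rowP => i; rewrite !mxE; exact: conjC_real.
Qed.

Lemma psd_unitary_diag n (P : 'M[C]_n) (a : 'rV[C]_n) : P \is unitarymx ->
  psdmx (invmx P *m diag_mx a *m P) ->
  exists2 p : 'I_n -> R, (forall i, 0 <= p i) & diag_mx a = rdiag p.
Proof.
move=> uP [_ a_psd]; have Pu := unitarymx_unit uP.
have a_ge0 i : 0 <= a 0 i.
  have := a_psd (delta_mx 0 i *m P).
  rewrite adj_mul (adj_unitary uP) adj_delta_mx !mulmxA (mulmxK Pu) -!mulmxA (mulKVmx Pu).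
  by rewrite mulmxA -rowE row_diag_mx -scalemxAl mul_delta_mx !mxE eqxx mulr1.
exists (fun i => complex.Re (a 0 i)) => [i|]; first by rewrite -ler0c RRe_real ?ger0_real.
by congr diag_mx; apply/rowP => i; rewrite mxE RRe_real ?ger0_real.
Qed.

Lemma commuting_psd_codiag n (A B : 'M[C]_n) : psdmx A -> psdmx B -> A *m B = B *m A ->
  exists P (p q : 'I_n -> R), [/\ P \is unitarymx, A = invmx P *m rdiag p *m P,
     B = invmx P *m rdiag q *m P, forall i, 0 <= p i & forall i, 0 <= q i].
Proof.
move=> A_psd B_psd AB.
have [P [a [b [uP A_diag B_diag]]]] := codiagonalization2 A_psd.1 B_psd.1 AB.
rewrite A_diag in A_psd; rewrite B_diag in B_psd.
have [p p_ge0 a_p] := psd_unitary_diag uP A_psd.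
have [q q_ge0 b_q] := psd_unitary_diag uP B_psd.
rewrite a_p in A_diag; rewrite b_q in B_diag.
by exists P, p, q; split.
Qed.

Lemma commuting_states_codiag n (rho sigma : 'M[C]_n) :
  is_state rho -> is_state sigma -> rho *m sigma = sigma *m rho ->
  exists P (p q : 'I_n -> R), [/\ P \is unitarymx, rho = invmx P *m rdiag p *m P,
     sigma = invmx P *m rdiag q *m P, is_dist p & is_dist q].
Proof.
move=> [rho_psd rho_tr] [sigma_psd sigma_tr] rho_sigma.
have [P [p [q [uP rhoE sigmaE p_ge0 q_ge0]]]] :=
  commuting_psd_codiag rho_psd sigma_psd rho_sigma.
have Pu := unitarymx_unit uP.
have sum1 f : \tr (invmx P *m rdiag f *m P) = 1 -> \sum_i f i = 1.
  by rewrite (mxtrace_conj _ Pu) mxtrace_rdiag => /(congr1 (@complex.Re R)).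
by exists P, p, q; split; rewrite // /is_dist ?sum1 -?rhoE -?sigmaE.
Qed.

Lemma full_rank_rdiag_gt0 n (P : 'M[C]_n) (q : 'I_n -> R) : P \is unitarymx ->
  (forall i, 0 <= q i) -> \rank (invmx P *m rdiag q *m P) = n -> forall i, 0 < q i.
Proof.
move=> uP q_ge0 full i; have Pu := unitarymx_unit uP.
have : invmx P *m rdiag q *m P \in unitmx by rewrite -row_free_unit /row_free full.
rewrite !unitmx_mul => /andP[/andP[_]]; rewrite unitmxE det_diag unitfE => /prodf_neq0.
by move=> /(_ i isT) + _; rewrite mxE lt_def q_ge0 andbT; apply: contraNneq => ->.
Qed.

Lemma sum_enum_val_prod (V : nmodType) n n' (F : 'I_n * 'I_n' -> V) :
  \sum_(k < #|{: 'I_n * 'I_n'}|) F (enum_val k) = \sum_x \sum_y F (x, y).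
Proof.
rewrite -(big_enum_val (A := {: 'I_n * 'I_n'})) /= pair_big.
by apply: eq_bigr => -[x y].
Qed.

Lemma delta_mulmx_delta n n' (y : 'I_n') (x : 'I_n) (M : 'M[C]_n) :
  (delta_mx y x : 'M[C]_(n', n)) *m M *m delta_mx x y = M x x *: delta_mx y y.
Proof.
rewrite -[delta_mx y x](mul_delta_mx (0 : 'I_1)) -[delta_mx x y](mul_delta_mx (0 : 'I_1)).
have Mxx : (delta_mx 0 x : 'rV[C]_n) *m M *m delta_mx x 0 = (M x x)%:M.
  by rewrite -rowE -colE; apply/matrixP => i j; rewrite !ord1 !mxE mulr1n.
have -> : (delta_mx y 0 : 'M[C]_(n', 1)) *m (delta_mx 0 x : 'rV[C]_n) *m M *m
      ((delta_mx x 0 : 'cV[C]_n) *m (delta_mx 0 y : 'rV[C]_n'))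
    = delta_mx y 0 *m ((delta_mx 0 x : 'rV[C]_n) *m M *m delta_mx x 0)
        *m (delta_mx 0 y : 'rV[C]_n').
  by rewrite !mulmxA.
by rewrite Mxx mul_mx_scalar -scalemxAl mul_delta_mx.
Qed.

Lemma stochastic_channel n n' (P : 'M[C]_n) (P' : 'M[C]_n') (W : 'I_n -> 'I_n' -> R) :
  P \is unitarymx -> P' \is unitarymx -> stochastic W ->
  exists E : 'M[C]_n -> 'M[C]_n', is_channel E /\
    forall f, E (invmx P *m rdiag f *m P) = invmx P' *m rdiag (stoch_map W f) *m P'.
Proof.
move=> uP uP' [W_ge0 W_sum1]; have Pu := unitarymx_unit uP; have Pu' := unitarymx_unit uP'.
pose Kr (z : 'I_n * 'I_n') : 'M[C]_(n', n) :=
  (Num.sqrt (W z.1 z.2))%:C *: (invmx P' *m delta_mx z.2 z.1 *m P).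
pose K (k : 'I_#|{: 'I_n * 'I_n'}|) := Kr (enum_val k).
have sqrtW x y : (Num.sqrt (W x y))%:C * (Num.sqrt (W x y))%:C = (W x y)%:C.
  by rewrite -rmorphM -expr2 sqr_sqrtr.
have adjKr x y : adj (Kr (x, y)) = (Num.sqrt (W x y))%:C *: (invmx P *m delta_mx x y *m P').
  rewrite adj_scale conjC_real !adj_mul adj_delta_mx.
  by rewrite (adj_invmx_unitary uP') (adj_unitary uP) mulmxA.
have KK x y : adj (Kr (x, y)) *m Kr (x, y) = (W x y)%:C *: (invmx P *m delta_mx x x *m P).
  rewrite adjKr -scalemxAl -scalemxAr scalerA sqrtW; congr (_ *: _).
  by rewrite !mulmxA (mulmxK Pu') -[_ *m delta_mx x y *m _]mulmxA mul_delta_mx.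
have KXK x y X : Kr (x, y) *m X *m adj (Kr (x, y)) =
    ((W x y)%:C * (P *m X *m invmx P) x x) *: (invmx P' *m delta_mx y y *m P').
  rewrite adjKr -!scalemxAl -!scalemxAr scalerA sqrtW -scalerA; congr (_ *: _).
  transitivity (invmx P' *m (delta_mx y x *m (P *m X *m invmx P) *m delta_mx x y) *m P').
    by rewrite !mulmxA.
  rewrite delta_mulmx_delta -scalemxAr -scalemxAl.
  exact: erefl.
exists (fun X => \sum_k K k *m X *m adj (K k)); split.
  exists #|{: 'I_n * 'I_n'}|, K; split=> [|X //].
  rewrite (sum_enum_val_prod (fun z => adj (Kr z) *m Kr z)).
  under eq_bigr do under eq_bigr do rewrite KK.
  under eq_bigr do rewrite -scaler_suml -rmorph_sum W_sum1 scale1r.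
  by rewrite -mulmx_suml -mulmx_sumr -mx1_sum_delta mulmx1 mulVmx.
move=> f; rewrite (sum_enum_val_prod (fun z => Kr z *m _ *m adj (Kr z))).
have Pf : P *m (invmx P *m rdiag f *m P) *m invmx P = rdiag f.
  by rewrite !mulmxA (mulmxV Pu) mul1mx (mulmxK Pu).
under eq_bigr do under eq_bigr do rewrite KXK Pf /rdiag mxE mxE eqxx mulr1n -rmorphM.
rewrite exchange_big /= /rdiag diag_mx_sum_delta mulmx_sumr mulmx_suml.
apply: eq_bigr => y _; rewrite -scaler_suml -rmorph_sum mxE -scalemxAr -scalemxAl.
exact: erefl.
Qed.

Lemma trdist_rdiag n (P : 'M[C]_n) (f g : 'I_n -> R) : P \is unitarymx ->
  trdist (invmx P *m rdiag f *m P) (invmx P *m rdiag g *m P) = (\sum_i `|f i - g i|) / 2.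
Proof.
move=> uP; have Pu := unitarymx_unit uP.
rewrite /trdist /trnorm conj_mxB rdiagB !adj_mul adj_rdiag.
rewrite (adj_unitary uP) (adj_invmx_unitary uP) mulmxA (mulmx_conj _ _ Pu) rdiagM.
rewrite (mxfun_rdiag _ _ uP) (mxtrace_conj _ Pu) mxtrace_rdiag.
by congr (_ / 2); apply: eq_bigr => i _; rewrite -expr2 sqrtr_sqr.
Qed.

Lemma trdist_rdiag_le n (P : 'M[C]_n) (f g : 'I_n -> R) eps : P \is unitarymx ->
  \sum_i `|f i - g i| <= 2 * eps ->
  trdist (invmx P *m rdiag f *m P) (invmx P *m rdiag g *m P) <= eps.
Proof. by move=> uP fg; rewrite (trdist_rdiag _ _ uP) ler_pdivrMr // mulrC. Qed.

Lemma stochastic_majorizes n n' (P : 'M[C]_n) (P' : 'M[C]_n') (p q : 'I_n -> R)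
    (q' : 'I_n' -> R) (W : 'I_n -> 'I_n' -> R) :
  P \is unitarymx -> P' \is unitarymx -> stochastic W -> stoch_map W q =1 q' ->
  majorizes (invmx P *m rdiag p *m P) (invmx P *m rdiag q *m P)
    (invmx P' *m rdiag (stoch_map W p) *m P') (invmx P' *m rdiag q' *m P').
Proof.
move=> uP uP' W_st Wq; have [E [E_ch E_rdiag]] := stochastic_channel uP uP' W_st.
exists E; split; first exact: E_ch.
by split; [exact: E_rdiag | rewrite -(eq_rdiag Wq); exact: E_rdiag].
Qed.

End QuantumToClassical.

Local Close Scope complex_scope.

Theorem theorem8 (R : realType) (d d' : nat)
  (rho sigma : 'M[R[i]]_d) (rho' sigma' : 'M[R[i]]_d') (eps : R) :
  is_state rho -> is_state sigma -> rho *m sigma = sigma *m rho ->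
  is_state rho' -> is_state sigma' -> rho' *m sigma' = sigma' *m rho' ->
  \rank sigma = d -> \rank sigma' = d' ->
  0 < eps -> eps < 1 ->
  rel_entropy rho sigma - fdev rho sigma eps >= rel_entropy rho' sigma' + fdev rho' sigma' eps ->
  majorizes_eps eps rho sigma rho' sigma'.
Proof.
move=> rho_st sigma_st rho_sigma rho'_st sigma'_st rho_sigma' full full' e0 e1 gap.
have [P [p [q [uP rhoE sigmaE dp dq]]]] :=
  commuting_states_codiag rho_st sigma_st rho_sigma.
have [P' [p' [q' [uP' rho'E sigma'E dp' dq']]]] :=
  commuting_states_codiag rho'_st sigma'_st rho_sigma'.
subst rho sigma rho' sigma'.
have q_gt0 := full_rank_rdiag_gt0 uP dq.1 full.
have q'_gt0 := full_rank_rdiag_gt0 uP' dq'.1 full'.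
rewrite /fdev (rel_entropy_rdiag p q uP) (rel_entropy_rdiag p' q' uP') in gap.
rewrite (rel_variance_rdiag p q uP) (rel_variance_rdiag p' q' uP') in gap.
have [W [W_st Wq Wp]] := crel_conversion dp dq q_gt0 dp' dq' q'_gt0 e0 e1 gap.
exists (invmx P' *m rdiag (stoch_map W p) *m P'); split.
  exact: stochastic_majorizes.
exact: trdist_rdiag_le.
Qed.
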